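(* Let $G\in\mathbb{G}_\pi$ have vertex set $V=\{v_1,\dots,v_n\}$ with $n>2$, and let $T=V\setminus\{v_1,v_2\}$. Then $\mathcal{R}(G;V\setminus\{v_1\},T)=\mathcal{R}(G;V\setminus\{v_2\},T)$.
   Context: Let $\mathbb{W}$ be the field of rational functions $p/q$ in a complex variable $\lambda$ ($p,q\in\mathbb{C}[\lambda]$, $q\ne0$); $\pi(p/q)=\deg p-\deg q$ (zero counts as $\pi\le 0$). A graph $G=(V,E,\omega)$ is a finite directed graph, edges $E$ (loops allowed, at most one edge $e_{ij}$ from $v_i$ to $v_j$), weights $\omega:E\to\mathbb{W}\setminus\{0\}$, $\omega(e_{ij})=0$ for non-edges, $M(G)_{ij}=\omega(e_{ij})$. $\mathbb{G}_\pi$ is the set of graphs with $\pi(M(G)_{ij})\le0$ for all entries. $\bar S=V\setminus S$; $\ell(G)$ is $G$ without loops. A path is a sequence of distinct vertices $u_1,\dots,u_m$ ($m\ge2$) with edges $u_k\to u_{k+1}$; a cycle is the same with $u_1=u_m$, $u_1,\dots,u_{m-1}$ distinct; $u_2,\dots,u_{m-1}$ are interior. A nonempty $S\subseteq V$ is a structural set ($S\in st(G)$) if $\ell(G)|_{\bar S}$ has no cycles and $\omega(e_{ii})\ne\lambda$ for $v_i\in\bar S$. For $v_i,v_j\in S$, $\mathcal{B}_{ij}(G;S)$ = paths or cycles from $v_i$ to $v_j$ with no interior vertex in $S$; $\mathcal{P}_\omega(u_1,\dots,u_m)=\omega(u_1u_2)\prod_{k=2}^{m-1}\frac{\omega(u_ku_{k+1})}{\lambda-\omega(u_ku_k)}$;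 $\mathcal{R}_S(G)$ is the graph on $S$ with an edge $v_i\to v_j$ iff $\mathcal{B}_{ij}(G;S)\ne\emptyset$, of weight $\sum_{\beta\in\mathcal{B}_{ij}(G;S)}\mathcal{P}_\omega(\beta)$. For $S_2\subseteq S_1\subseteq V$ with $S_1\in st(G)$ and $S_2\in st(\mathcal{R}_{S_1}(G))$, $\mathcal{R}(G;S_1,S_2)=\mathcal{R}_{S_2}(\mathcal{R}_{S_1}(G))$. *)

From Stdlib Require Import Reals.
From HB Require Import structures.
From mathcomp Require Import all_boot all_order all_algebra.
From mathcomp Require Import complex.
From mathcomp Require Import Rstruct.
Set Implicit Arguments. Unset Strict Implicit. Unset Printing Implicit Defensive.
Import GRing.Theory Num.Theory.
Local Open Scope ring_scope.

Definition Cx : numClosedFieldType := (Rdefinitions.R)[i].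

Definition W : fieldType := {fraction {poly Cx}}.

Definition polyW (p : {poly Cx}) : W := @FracField.tofrac {poly Cx} p.
Local Notation "x %:F" := (polyW x).

Definition lam : W := ('X : {poly Cx})%:F.

(* pi(x) <= 0 : x = p/q with deg p <= deg q (size = deg + 1, size 0 = 0) *)
Definition piLe0 (x : W) : Prop :=
  exists p q : {poly Cx}, [/\ q != 0, x = p%:F / q%:F & (size p <= size q)%N].

(* A weighted directed graph whose vertices form a subset gV of 'I_n.
   gE is the edge set (pairs (i,j) = edge v_i -> v_j), gw the weight matrix
   (gw i j = omega(e_ij), which is 0 for non-edges). *)
Record graph (n : nat) := Graph {
  gV : {set 'I_n};
  gE : {set 'I_n * 'I_n};
  gw : 'M[W]_n }.

Definition graph_of_mx n (M : 'M[W]_n) : graph n :=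
  Graph [set: 'I_n] [set ij | M ij.1 ij.2 != 0] M.

Definition in_Gpi n (G : graph n) : Prop := forall i j, piLe0 (gw G i j).

(* P_omega(u_1,...,u_m) for the path u :: s ++ [:: j]:
   omega(u1 u2) * prod_{k=2}^{m-1} omega(u_k u_{k+1}) / (lambda - omega(u_k u_k)) *)
Fixpoint Pw n (w : 'M[W]_n) (u : 'I_n) (s : seq 'I_n) (j : 'I_n) : W :=
  match s with
  | [::] => w u j
  | x :: s' => w u x * (Pw w x s' j / (lam - w x x))
  end.

(* B_ij(G;S): the interior sequence t of a path or cycle i, t, j of G
   (edges of G, interior vertices distinct, in V \ S).  Since i, j are in S,
   distinctness from the endpoints is automatic. *)
Definition inB n (G : graph n) (S : {set 'I_n}) (i j : 'I_n) (t : seq 'I_n) : bool :=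
  [&& uniq t, all (fun x => x \in gV G :\: S) t &
      path (fun a b => (a, b) \in gE G) i (rcons t j)].

(* R_S(G) : graph on S; the interiors have length < n, enumerated as tuples *)
Definition redE n (G : graph n) (S : {set 'I_n}) : {set 'I_n * 'I_n} :=
  [set ij | [&& ij.1 \in S, ij.2 \in S &
     [exists k : 'I_n.+1, exists t : k.-tuple 'I_n, inB G S ij.1 ij.2 t]]].

Definition redw n (G : graph n) (S : {set 'I_n}) : 'M[W]_n :=
  \matrix_(i, j) (if (i \in S) && (j \in S) then
     \sum_(k < n.+1) \sum_(t : k.-tuple 'I_n | inB G S i j t) Pw (gw G) i t j
   else 0).

Definition red n (G : graph n) (S : {set 'I_n}) : graph n :=
  Graph S (redE G S) (redw G S).

Definition structural n (G : graph n) (S : {set 'I_n}) : Prop :=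
  [/\ S != set0, S \subset gV G,
      ~ (exists (u : 'I_n) (s : seq 'I_n),
           [/\ u \in gV G :\: S, uniq (u :: s), all (fun x => x \in gV G :\: S) s &
               path (fun a b => (a != b) && ((a, b) \in gE G)) u (rcons s u)])
    & forall i, i \in gV G :\: S -> gw G i i != lam].

Definition red2 n (G : graph n) (S1 S2 : {set 'I_n}) : graph n :=
  red (red G S1) S2.

From mathcomp Require Import all_boot all_order all_algebra.
From mathcomp Require Import fraction ring.
Set Implicit Arguments. Unset Strict Implicit. Unset Printing Implicit Defensive.
Import GRing.Theory.
Local Open Scope ring_scope.

(* When V \ S is a single vertex x, the branches of R_S(G) are the edges of G
   and the two-edge paths through x, so R_S(G) has weights
   w a b + w a x w x b / (lam - w x x): one step of Gaussian elimination of x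
   from lam - w.  Eliminating v1 then v2, or v2 then v1, both compute the Schur
   complement of the {v1, v2} block, hence agree.  The hypothesis pi <= 0 keeps
   every pivot lam - w x x nonzero, since it is preserved by elimination and
   lam - u has positive degree whenever pi(u) <= 0. *)

Local Notation "x %:F" := (polyW x).

Lemma piLe0D x y : piLe0 x -> piLe0 y -> piLe0 (x + y).
Proof.
move=> [p1 [q1 [q1_neq0 -> p1q1]]] [p2 [q2 [q2_neq0 -> p2q2]]].
exists (p1 * q2 + p2 * q1), (q1 * q2); split; first by rewrite mulf_neq0.
  by rewrite addf_div ?tofrac_eq0 // /polyW tofracD !tofracM.
rewrite (size_mul q1_neq0 q2_neq0); apply: leq_trans (size_polyD _ _) _.
rewrite geq_max; apply/andP; split; apply: leq_trans (size_polyMleq _ _) _.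
  by rewrite -!subn1 leq_sub2r // leq_add2r.
by rewrite -!subn1 leq_sub2r // addnC leq_add2l.
Qed.

Lemma piLe0M x y : piLe0 x -> piLe0 y -> piLe0 (x * y).
Proof.
move=> [p1 [q1 [q1_neq0 -> p1q1]]] [p2 [q2 [q2_neq0 -> p2q2]]].
exists (p1 * p2), (q1 * q2); split; first by rewrite mulf_neq0.
  by rewrite mulf_div /polyW !tofracM.
rewrite (size_mul q1_neq0 q2_neq0); apply: leq_trans (size_polyMleq _ _) _.
by rewrite -!subn1 leq_sub2r // leq_add.
Qed.

(* If [u = p/q] with [deg p <= deg q], then [lam - u = (X q - p)/q] and
   [X q - p] has degree [deg q + 1]. *)
Lemma piLe0_lamB u : piLe0 u -> lam - u != 0 /\ piLe0 (lam - u)^-1.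
Proof.
move=> [p [q [q_neq0 -> pq]]].
have size_Xq_p : size ('X * q - p) = (size q).+1.
  by rewrite size_polyDl mulrC size_mulX // size_polyN ltnS.
have Xq_p_neq0 : 'X * q - p != 0 by rewrite -size_poly_eq0 size_Xq_p.
have -> : lam - p%:F / q%:F = ('X * q - p)%:F / q%:F.
  by rewrite /polyW tofracB tofracM mulrBl mulfK ?tofrac_eq0.
split; first by rewrite mulf_neq0 ?invr_eq0 ?tofrac_eq0.
exists q, ('X * q - p); split=> //; last by rewrite size_Xq_p.
by rewrite invfM invrK mulrC.
Qed.

Lemma piLe0_neq_lam u : piLe0 u -> u != lam.
Proof. by case/piLe0_lamB=> lamBu _; apply: contraNneq lamBu => ->; rewrite subrr. Qed.

Section VertexElimination.
Variables (F : fieldType) (l : F) (I : Type).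

Definition elim_weight (w : I -> I -> F) (x : I) (a b : I) : F :=
  w a b + w a x * (w x b / (l - w x x)).

Definition elim_rel (e : rel I) (x : I) : rel I :=
  fun a b => e a b || e a x && e x b.

Lemma elim_relC e x y : elim_rel (elim_rel e x) y =2 elim_rel (elim_rel e y) x.
Proof.
move=> a b; rewrite /elim_rel.
by case: (e a b); case: (e a x); case: (e x b); case: (e a y); case: (e y b);
   case: (e x y); case: (e y x).
Qed.

(* The common denominator is the determinant
   [(l - w x x) (l - w y y) - w y x w x y] of the [{x, y}] block. *)
Lemma elim_weightC w x y :
  l - w x x != 0 -> l - w y y != 0 -> l - elim_weight w x y y != 0 ->
  elim_weight (elim_weight w x) y =2 elim_weight (elim_weight w y) x.
Proof.
move=> dx_neq0 dy_neq0 dxy_neq0 a b; rewrite /elim_weight in dxy_neq0 *.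
have elim_xy : l - (w y y + w y x * (w x y / (l - w x x))) =
    ((l - w x x) * (l - w y y) - w y x * w x y) / (l - w x x) by field.
have elim_yx : l - (w x x + w x y * (w y x / (l - w y y))) =
    ((l - w x x) * (l - w y y) - w y x * w x y) / (l - w y y) by field.
rewrite elim_xy in dxy_neq0 *; rewrite elim_yx.
move: (l - w x x) (l - w y y) dx_neq0 dy_neq0 dxy_neq0 => dx dy dx0 dy0 det_dx0.
have det0 : dx * dy - w y x * w x y != 0.
  by apply: contraNneq det_dx0 => ->; rewrite mul0r.
by field; rewrite dx0 dy0 det0.
Qed.

End VertexElimination.

Lemma big_tuple_unique (T : finType) (R : nmodType) (P : pred (seq T))
    (F : seq T -> R) k (s : seq T) :
  size s = k -> (forall t, size t = k -> P t -> t = s) ->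
  \sum_(t : k.-tuple T | P t) F t = if P s then F s else 0.
Proof.
move=> /eqP s_k P_s; case: ifP => [Ps | nPs]; last first.
  by apply: big1 => t Pt; move: nPs; rewrite -(P_s _ (size_tuple t) Pt) Pt.
rewrite (bigD1 (Tuple s_k)) //= big1 ?addr0 // => t /andP[Pt].
by rewrite (_ : t = Tuple s_k) ?eqxx //; apply/val_inj/P_s/Pt/size_tuple.
Qed.

Definition gedge n (G : graph n) : rel 'I_n := fun a b => (a, b) \in gE G.

Definition edge_supported n (G : graph n) : Prop :=
  forall a b, ~~ gedge G a b -> gw G a b = 0.

Lemma edge_supported_red n (G : graph n) S : edge_supported (red G S).
Proof.
move=> i j; rewrite /gedge inE /= => nE; rewrite /redw mxE.
case: ifP => // /andP[iS jS]; rewrite iS jS /= in nE.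
apply: big1 => k _; apply: big1 => t Bt; case/negP: nE.
by apply/existsP; exists k; apply/existsP; exists t.
Qed.

Section OneVertexReduction.
Variables (n : nat) (G : graph n) (S : {set 'I_n}) (x : 'I_n).
Hypothesis VS_x : gV G :\: S = [set x].

Lemma inB_one_vertex i j t : inB G S i j t -> t = [::] \/ t = [:: x].
Proof.
case/and3P; rewrite VS_x.
case: t => [|b [|c r]] uniq_t in_x _; [by left | right | exfalso].
  by move: in_x => /= /andP[/set1P ->].
by move: in_x uniq_t => /= /and3P[/set1P -> /set1P -> _]; rewrite inE eqxx.
Qed.

Lemma inB_nil i j : inB G S i j [::] = gedge G i j.
Proof. by rewrite /inB /= andbT. Qed.

Lemma inB_vertex i j : inB G S i j [:: x] = gedge G i x && gedge G x j.
Proof. by rewrite /inB /= VS_x set11 /= andbT. Qed.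

Lemma no_cycle_one_vertex (E : {set 'I_n * 'I_n}) :
  ~ (exists (u : 'I_n) (s : seq 'I_n),
       [/\ u \in gV G :\: S, uniq (u :: s), all (fun z => z \in gV G :\: S) s &
           path (fun a b => (a != b) && ((a, b) \in E)) u (rcons s u)]).
Proof.
case=> u [[|a s] []]; rewrite VS_x => /set1P -> //=; first by rewrite eqxx.
by rewrite inE negb_or => /andP[/andP[xa _] _] /andP[/set1P ax]; rewrite ax eqxx in xa.
Qed.

Lemma structural_one_vertex :
  S != set0 -> S \subset gV G -> gw G x x != lam -> structural G S.
Proof.
move=> S0 SV wxx; split=> [//|//||i]; first exact: no_cycle_one_vertex.
by rewrite VS_x => /set1P ->.
Qed.

Lemma redE_one_vertex i j :
  ((i, j) \in redE G S) = [&& i \in S, j \in S & elim_rel (gedge G) x i j].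
Proof.
have n_gt0 : (0 < n)%N := leq_ltn_trans (leq0n x) (ltn_ord x).
rewrite inE /=; congr [&& _, _ & _]; rewrite /elim_rel -inB_nil -inB_vertex.
apply/existsP/orP => [[k /existsP[t Bt]] | [B0 | B1]].
- by case: (inB_one_vertex Bt) => t_eq; rewrite t_eq in Bt; [left | right].
- by exists ord0; apply/existsP; exists [tuple].
- by exists (Ordinal (n_gt0 : (1 < n.+1)%N)); apply/existsP; exists [tuple x].
Qed.

Lemma redw_one_vertex i j : edge_supported G -> i \in S -> j \in S ->
  redw G S i j = elim_weight lam (gw G) x i j.
Proof.
move=> suppG iS jS; rewrite /redw mxE iS jS /=.
have n_gt0 : (0 < n)%N := leq_ltn_trans (leq0n x) (ltn_ord x).
rewrite -(big_mkord xpredT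
  (fun k => \sum_(t : k.-tuple 'I_n | inB G S i j t) Pw (gw G) i t j)).
rewrite big_ltn // big_ltn // [X in _ + (_ + X)]big_nat_cond.
rewrite [X in _ + (_ + X)]big1 ?addr0 => [|k /andP[/andP[k_ge2 _] _]]; last first.
  apply: big1 => t /inB_one_vertex t_eq.
  by case: t_eq (size_tuple t) k_ge2 => -> <-.
have sum_unique := @big_tuple_unique _ _ (inB G S i j) (fun t => Pw (gw G) i t j).
have B_nil t : size t = 0 -> inB G S i j t -> t = [::].
  by move=> size_t /inB_one_vertex[] t_eq; rewrite t_eq in size_t *.
have B_x t : size t = 1 -> inB G S i j t -> t = [:: x].
  by move=> size_t /inB_one_vertex[] t_eq; rewrite t_eq in size_t *.
rewrite (sum_unique 0 [::] erefl B_nil) (sum_unique 1 [:: x] erefl B_x).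
rewrite inB_nil inB_vertex /= /elim_weight.
congr (_ + _); first by case: (boolP (gedge G i j)) => [// | /suppG ->].
case: (boolP (_ && _)) => [// | ]; rewrite negb_and.
by case/orP=> /suppG ->; rewrite ?mul0r ?mulr0.
Qed.

End OneVertexReduction.

Lemma piLe0_elim_weight n (w : 'M[W]_n) x a b :
  (forall i j, piLe0 (w i j)) -> piLe0 (elim_weight lam w x a b).
Proof.
move=> w_pi; apply/piLe0D/piLe0M/piLe0M => //.
exact: (piLe0_lamB (w_pi x x)).2.
Qed.

Lemma edge_supported_graph_of_mx n (M : 'M[W]_n) : edge_supported (graph_of_mx M).
Proof. by move=> a b; rewrite /gedge inE negbK => /eqP. Qed.

Section PairReduction.
Variables (n : nat) (M : 'M[W]_n) (x y : 'I_n).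
Hypotheses (n_gt2 : (2 < n)%N) (xy : x != y) (M_pi : forall i j, piLe0 (M i j)).

Let G := graph_of_mx M.
Let S := [set: 'I_n] :\ x.
Let T := [set: 'I_n] :\: [set x; y].

Let VS_x : gV G :\: S = [set x].
Proof. by apply/setP => z; rewrite !inE; case: (z == x). Qed.

Let VT_y : gV (red G S) :\: T = [set y].
Proof.
apply/setP => z; rewrite !inE /= !andbT negbK.
by case: (z =P y) => [->|_]; [rewrite eq_sym xy orbT | rewrite orbF; case: (z == x)].
Qed.

Let yS : y \in S. Proof. by rewrite !inE eq_sym xy. Qed.

Let TS : T \subset S.
Proof. by apply/subsetP => z; rewrite !inE negb_or => /andP[/andP[-> _] _]. Qed.

Let T_neq0 : T != set0.
Proof.
apply: contraTneq n_gt2 => T0; rewrite -leqNgt.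
have /subset_leq_card : [set: 'I_n] \subset [set x; y] by rewrite -setD_eq0 -/T T0.
by rewrite cardsT card_ord cards2 xy.
Qed.

Let redw_S i j : i \in S -> j \in S -> redw G S i j = elim_weight lam M x i j.
Proof. exact/redw_one_vertex/edge_supported_graph_of_mx. Qed.

Lemma structural_remove_vertex : structural G S.
Proof.
apply: structural_one_vertex VS_x _ (subsetT _) (piLe0_neq_lam (M_pi x x)).
by apply/set0Pn; exists y.
Qed.

Lemma structural_red_remove_pair : structural (red G S) T.
Proof.
apply: structural_one_vertex VT_y T_neq0 TS _.
by rewrite /= redw_S //; apply/piLe0_neq_lam/piLe0_elim_weight.
Qed.

Let redw_remove_pair :
  redw (red G S) T = \matrix_(i, j) (if (i \in T) && (j \in T)
    then elim_weight lam (elim_weight lam M x) y i j else 0).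
Proof.
apply/matrixP => i j; rewrite [RHS]mxE; case: ifP => [/andP[iT jT] | iTjT].
  rewrite (redw_one_vertex VT_y (@edge_supported_red n G S) iT jT) /= /elim_weight.
  by rewrite !redw_S // (subsetP TS).
by rewrite [LHS]mxE iTjT.
Qed.

Let redE_remove_pair :
  redE (red G S) T = [set ij | [&& ij.1 \in T, ij.2 \in T &
    elim_rel (elim_rel (gedge G) x) y ij.1 ij.2]].
Proof.
apply/setP => -[i j]; rewrite (redE_one_vertex VT_y) [RHS]inE /=.
case: (boolP (i \in T)) => //= iT; case: (boolP (j \in T)) => //= jT.
have [iS jS] : i \in S /\ j \in S by rewrite !(subsetP TS).
by rewrite /elim_rel /gedge /= !(redE_one_vertex VS_x) iS jS yS.
Qed.

Lemma red2_remove_pair :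
  red2 G S T = Graph T
    [set ij | [&& ij.1 \in T, ij.2 \in T &
       elim_rel (elim_rel (gedge G) x) y ij.1 ij.2]]
    (\matrix_(i, j) (if (i \in T) && (j \in T)
       then elim_weight lam (elim_weight lam M x) y i j else 0)).
Proof. by rewrite /red2 -redE_remove_pair -redw_remove_pair. Qed.

End PairReduction.

Theorem lemma4 (n : nat) (M : 'M[W]_n) (v1 v2 : 'I_n) :
  (2 < n)%N -> v1 != v2 -> in_Gpi (graph_of_mx M) ->
  let G := graph_of_mx M in
  let S1 := [set: 'I_n] :\ v1 in
  let S2 := [set: 'I_n] :\ v2 in
  let T := [set: 'I_n] :\: [set v1; v2] in
  [/\ structural G S1, structural (red G S1) T,
      structural G S2, structural (red G S2) T &
      red2 G S1 T = red2 G S2 T].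
Proof.
move=> n_gt2 v12 M_pi G S1 S2 T; rewrite {}/G {}/S1 {}/S2 {}/T.
have v21 : v2 != v1 by rewrite eq_sym.
have T21 : [set: 'I_n] :\: [set v1; v2] = [set: 'I_n] :\: [set v2; v1].
  by rewrite setUC.
split.
- exact: structural_remove_vertex v12 M_pi.
- exact: structural_red_remove_pair n_gt2 v12 M_pi.
- exact: structural_remove_vertex v21 M_pi.
- by rewrite T21; apply: structural_red_remove_pair n_gt2 v21 M_pi.
rewrite red2_remove_pair // T21 red2_remove_pair //; congr Graph.
  by apply/setP => ij; rewrite !inE elim_relC.
apply/matrixP => i j; rewrite !mxE; case: ifP => // _.
have [dx_neq0 _] := piLe0_lamB (M_pi v1 v1).
have [dy_neq0 _] := piLe0_lamB (M_pi v2 v2).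
have [dxy_neq0 _] := piLe0_lamB (piLe0_elim_weight v1 v2 v2 M_pi).
exact: (elim_weightC dx_neq0 dy_neq0 dxy_neq0).
Qed.
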